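(* Let $\mathcal{X}$ be a finite alphabet with orthonormal basis $\{|x\rangle\}_{x\in\mathcal{X}}$ of the classical system $X$, and let $E$ be a quantum system. Let $\rho=\sum_{x\in\mathcal{X}}P(x)|x\rangle\langle x|\otimes\omega(x)$ and $\rho_*=\sum_{x\in\mathcal{X}}P_*(x)|x\rangle\langle x|\otimes\omega_*(x)$ be classical-quantum states, where $P,P_*$ are probability distributions on $\mathcal{X}$ and $\omega(x),\omega_*(x)$ are density operators on $E$. Let $S\subseteq\mathcal{X}$, $\Pi=\sum_{x\in S}|x\rangle\langle x|$ (acting on $X$, tensored with the identity on $E$), $p=\mathrm{tr}\,\Pi\rho\Pi$, $p_*=\mathrm{tr}\,\Pi\rho_*\Pi$, and define the projected states $\tau=p^{-1}\Pi\rho\Pi$ and $\tau_*=p_*^{-1}\Pi\rho_*\Pi$ (with $p,p_*>0$). Let $\epsilon>0$. If $D(\rho,\rho_* )\le p\,\frac{\epsilon^2}{4}$, then $|p-p_*|\le p\,\frac{\epsilon^2}{2}$ and $D(\tau,\tau_* )\le\frac{\epsilon^2}{2}$.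
   Context: For operators $A,B$, the trace distance is $D(A,B)=\frac{1}{2}\mathrm{tr}|A-B|$, where $|O|=\sqrt{O^\dagger O}$. The positivity $p,p_*>0$ is needed for $\tau,\tau_*$ to be defined. *)

From HB Require Import structures.
From mathcomp Require Import all_boot all_order all_algebra all_field.
From mathcomp Require Import mxtens.
From Stdlib Require Import ClassicalEpsilon.
Set Implicit Arguments. Unset Strict Implicit. Unset Printing Implicit Defensive.
Import Order.TTheory GRing.Theory Num.Theory.
Local Open Scope ring_scope.

Definition adjmx (C : numClosedFieldType) (m n : nat) (A : 'M[C]_(m, n)) : 'M[C]_(n, m) :=
  map_mx Num.conj (A^T).

Definition psdmx (C : numClosedFieldType) (n : nat) (A : 'M[C]_n) : Prop :=
  adjmx A = A /\ forall v : 'rV[C]_n, 0 <= (v *m A *m adjmx v) 0 0.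

Definition densitymx (C : numClosedFieldType) (n : nat) (A : 'M[C]_n) : Prop :=
  psdmx A /\ \tr A = 1.

(* the (unique) positive semidefinite square root of a matrix
   (chosen by classical choice; it exists and is unique for psd A) *)
Definition sqrtmx (C : numClosedFieldType) (n : nat) (A : 'M[C]_n) : 'M[C]_n :=
  epsilon (inhabits 0) (fun B => psdmx B /\ B *m B = A).

Definition absmx (C : numClosedFieldType) (n : nat) (O : 'M[C]_n) : 'M[C]_n :=
  sqrtmx (adjmx O *m O).

Definition trdist (C : numClosedFieldType) (n : nat) (A B : 'M[C]_n) : C :=
  \tr (absmx (A - B)) / 2.

Definition probdist (C : numClosedFieldType) (n : nat) (P : 'I_n -> C) : Prop :=
  (forall x, 0 <= P x) /\ \sum_(x < n) P x = 1.

Definition ketbra (C : numClosedFieldType) (n : nat) (x : 'I_n) : 'M[C]_n := delta_mx x x.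

Definition cqstate (C : numClosedFieldType) (n d : nat) (P : 'I_n -> C) (omega : 'I_n -> 'M[C]_d)
  : 'M[C]_(n * d) :=
  \sum_(x < n) P x *: tensmx (ketbra C x) (omega x).

Definition projS (C : numClosedFieldType) (n d : nat) (S : {set 'I_n}) : 'M[C]_(n * d) :=
  tensmx (\sum_(x in S) ketbra C x) (1%:M : 'M[C]_d).

(** The trace norm is dual to the operator norm: for Hermitian [H],
    [tr |H| = max { tr (S H) | -1 <= S <= 1 }], the maximum being attained at
    the sign of [H].  Write [rho'], [p'], [tau'] for the starred quantities.
    Testing [rho - rho'] against the reflection [2 Pi - 1] and using
    [tr rho = tr rho'] gives [|p - p'| <= D(rho, rho')].  For the projected
    states, [tau - tau' = p^-1 Pi (rho - rho') Pi + (p^-1 - p'^-1) Pi rho' Pi];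
    against an optimal [S] the first term contributes at most
    [2 D(rho, rho') / p] (since [Pi S Pi + (1 - Pi)] is again a contraction)
    and the second at most [|p - p'| / p] (since [|tr (S Pi rho' Pi)| <= p']).
    Hence [D(tau, tau') <= 3 D(rho, rho') / (2 p) <= 3 eps^2 / 8]. *)

From HB Require Import structures.
From mathcomp Require Import all_boot all_order all_algebra all_field.
From mathcomp Require Import mxtens spectral ring.
From Stdlib Require Import ClassicalEpsilon.
Import Order.TTheory GRing.Theory Num.Theory.
Local Open Scope ring_scope.
Set Implicit Arguments. Unset Strict Implicit. Unset Printing Implicit Defensive.

Lemma ler_norml_between (R : numDomainType) (x y : R) : - y <= x <= y -> `|x| <= y.
Proof.
move=> /andP[lx ux]; have y0 : 0 <= y.
  by rewrite -(pmulrn_lge0 _ (ltn0Sn 1)) mulr2n -{2}(opprK y) subr_ge0 (le_trans lx ux).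
by rewrite real_ler_norml ?lx ?ux // (ler_real ux) ger0_real.
Qed.

Section Adjoint.
Variable C : numClosedFieldType.

Lemma adjmxK m n (A : 'M[C]_(m, n)) : adjmx (adjmx A) = A.
Proof. exact: trmxCK. Qed.

Lemma adjmxM m n p (A : 'M[C]_(m, n)) (B : 'M[C]_(n, p)) :
  adjmx (A *m B) = adjmx B *m adjmx A.
Proof. by rewrite /adjmx trmx_mul map_mxM. Qed.

Lemma adjmxD m n (A B : 'M[C]_(m, n)) : adjmx (A + B) = adjmx A + adjmx B.
Proof. by rewrite /adjmx linearD map_mxD. Qed.

Lemma adjmxB m n (A B : 'M[C]_(m, n)) : adjmx (A - B) = adjmx A - adjmx B.
Proof. by rewrite /adjmx linearB map_mxB. Qed.

Lemma adjmxZ m n c (A : 'M[C]_(m, n)) : adjmx (c *: A) = c^* *: adjmx A.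
Proof. by rewrite /adjmx linearZ map_mxZ. Qed.

Lemma adjmx0 m n : adjmx (0 : 'M[C]_(m, n)) = 0.
Proof. by rewrite /adjmx trmx0 map_mx0. Qed.

Lemma adjmx1 n : adjmx (1%:M : 'M[C]_n) = 1%:M.
Proof. by rewrite /adjmx trmx1 map_mx1. Qed.

Lemma adjmx_delta m n (i : 'I_m) (j : 'I_n) :
  adjmx (delta_mx i j : 'M[C]_(m, n)) = delta_mx j i.
Proof. by rewrite /adjmx trmx_delta map_delta_mx. Qed.

Lemma adjmx_diag n (d : 'rV[C]_n) : adjmx (diag_mx d) = diag_mx (map_mx Num.conj d).
Proof. by rewrite /adjmx tr_diag_mx map_diag_mx. Qed.

Lemma adjmx_tens m n p q (A : 'M[C]_(m, n)) (B : 'M[C]_(p, q)) :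
  adjmx (A *t B) = adjmx A *t adjmx B.
Proof. by rewrite /adjmx trmx_tens map_mxT. Qed.

End Adjoint.

Section PositiveSemidefinite.
Variable C : numClosedFieldType.

Lemma psdmx_conj m n (X : 'M[C]_(m, n)) (A : 'M[C]_n) :
  psdmx A -> psdmx (X *m A *m adjmx X).
Proof.
move=> [hA pA]; split; first by rewrite !adjmxM adjmxK hA mulmxA.
by move=> v; have := pA (v *m X); rewrite adjmxM !mulmxA.
Qed.

Lemma psdmx_gram m n (X : 'M[C]_(m, n)) : psdmx (X *m adjmx X).
Proof.
split; first by rewrite adjmxM adjmxK.
move=> v; rewrite !mulmxA -mulmxA -adjmxM !mxE; apply: sumr_ge0 => k _.
by rewrite !mxE mul_conjC_ge0.
Qed.

Lemma psdmx0 n : psdmx (0 : 'M[C]_n).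
Proof. by split=> [|v]; rewrite ?adjmx0 // mulmx0 mul0mx mxE. Qed.

Lemma psdmxD n (A B : 'M[C]_n) : psdmx A -> psdmx B -> psdmx (A + B).
Proof.
move=> [hA pA] [hB pB]; split; first by rewrite adjmxD hA hB.
by move=> v; rewrite mulmxDr mulmxDl mxE addr_ge0.
Qed.

Lemma psdmx_sum n I (r : seq I) (P : pred I) (F : I -> 'M[C]_n) :
  (forall i, P i -> psdmx (F i)) -> psdmx (\sum_(i <- r | P i) F i).
Proof. by move=> h; apply: big_ind => //; [exact: psdmx0 | exact: psdmxD]. Qed.

Lemma psdmxZ n c (A : 'M[C]_n) : 0 <= c -> psdmx A -> psdmx (c *: A).
Proof.
move=> c0 [hA pA]; split; first by rewrite adjmxZ hA geC0_conj.
by move=> v; rewrite -scalemxAr -scalemxAl mxE mulr_ge0.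
Qed.

Lemma psdmx_diag n (d : 'rV[C]_n) : (forall i, 0 <= d 0 i) -> psdmx (diag_mx d).
Proof.
move=> d0; split.
  rewrite adjmx_diag; congr diag_mx; apply/rowP=> i.
  by rewrite !mxE geC0_conj.
move=> v; rewrite mul_mx_diag !mxE; apply: sumr_ge0 => k _; rewrite !mxE.
by rewrite mulrAC mulr_ge0 // mul_conjC_ge0.
Qed.

Lemma psdmx_diag_ge0 n (A : 'M[C]_n) i : psdmx A -> 0 <= A i i.
Proof.
move=> [_ pA]; have := pA (delta_mx 0 i).
by rewrite adjmx_delta -rowE -colE !mxE.
Qed.

Lemma psdmx_projector n (Pi : 'M[C]_n) :
  adjmx Pi = Pi -> Pi *m Pi = Pi -> psdmx Pi /\ psdmx (1%:M - Pi).
Proof.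
move=> PiH PiPi; split; first by rewrite -PiPi -{2}PiH; exact: psdmx_gram.
have -> : 1%:M - Pi = (1%:M - Pi) *m adjmx (1%:M - Pi).
  by rewrite adjmxB adjmx1 PiH mulmxBl mul1mx mulmxBr mulmx1 PiPi subrr subr0.
exact: psdmx_gram.
Qed.

End PositiveSemidefinite.

Section HermitianSpectral.
Variables (C : numClosedFieldType) (n : nat) (A : 'M[C]_n).
Local Notation U := (spectralmx A).
Local Notation d := (spectral_diag A).

Lemma spectralmx_unitary_r : U *m adjmx U = 1%:M.
Proof. exact/unitarymxP/spectral_unitarymx. Qed.

Lemma spectralmx_unitary_l : adjmx U *m U = 1%:M.
Proof. by rewrite /adjmx -invmx_unitary ?spectral_unitarymx // mulVmx ?spectral_unit. Qed.

Hypothesis AH : adjmx A = A.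

Lemma hermitian_spectralE : A = adjmx U *m diag_mx d *m U.
Proof.
have /orthomx_spectralP {1}-> : A \is normalmx by apply/normalmxP; rewrite -/(adjmx A) AH.
by rewrite invmx_unitary // spectral_unitarymx.
Qed.

Lemma hermitian_spectral_diagE : diag_mx d = U *m A *m adjmx U.
Proof.
apply/esym; rewrite [X in _ *m X *m _]hermitian_spectralE.
by rewrite !mulmxA spectralmx_unitary_r mul1mx -mulmxA spectralmx_unitary_r mulmx1.
Qed.

Lemma hermitian_spectral_real i : d 0 i \is Num.real.
Proof.
have /mxOverP -> // : d \is a realmx.
by apply/hermitian_spectral_diag_real/is_hermitianmxP; rewrite expr0 scale1r -/(adjmx A) AH.
Qed.

End HermitianSpectral.

Section SquareRoot.
Variable C : numClosedFieldType.

Lemma psdmx_spectral_ge0 n (A : 'M[C]_n) i : psdmx A -> 0 <= spectral_diag A 0 i.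
Proof.
move=> pA; have := psdmx_diag_ge0 i (psdmx_conj (spectralmx A) pA).
by rewrite -hermitian_spectral_diagE ?mxE ?eqxx ?mulr1n //; case: pA.
Qed.

Lemma psdmx_sqrt_exists n (A : 'M[C]_n) : psdmx A -> exists B, psdmx B /\ B *m B = A.
Proof.
move=> pA; set U := spectralmx A; set d := spectral_diag A.
set e : 'rV[C]_n := \row_j sqrtC (d 0 j).
have e0 i : 0 <= e 0 i by rewrite mxE sqrtC_ge0 psdmx_spectral_ge0.
exists (adjmx U *m diag_mx e *m U); split.
  by have := psdmx_conj (adjmx U) (psdmx_diag e0); rewrite adjmxK.
rewrite [RHS](hermitian_spectralE (proj1 pA)) -/U -/d.
rewrite -!mulmxA [U *m (adjmx U *m _)]mulmxA spectralmx_unitary_r mul1mx.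
rewrite [diag_mx e *m (_ *m _)]mulmxA mulmx_diag; congr (_ *m (diag_mx _ *m _)).
by apply/rowP=> j; rewrite !mxE -expr2 sqrtCK.
Qed.

Lemma sqrtmxP n (A : 'M[C]_n) :
  psdmx A -> psdmx (sqrtmx A) /\ sqrtmx A *m sqrtmx A = A.
Proof.
move=> pA; apply: (epsilon_spec (inhabits 0) (fun B => psdmx B /\ B *m B = A)).
exact: psdmx_sqrt_exists.
Qed.

End SquareRoot.

Section SpectralCalculus.
Variable C : numClosedFieldType.

Lemma mulmx_conj n (U V X Y : 'M[C]_n) : V *m U = 1%:M ->
  (U *m X *m V) *m (U *m Y *m V) = U *m (X *m Y) *m V.
Proof. by move=> VU; rewrite !mulmxA -[U *m X *m V *m U]mulmxA VU mulmx1. Qed.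

Lemma commute_unitary_conj n (U X Y : 'M[C]_n) : U *m adjmx U = 1%:M ->
  (adjmx U *m X *m U) *m (adjmx U *m Y *m U) = (adjmx U *m Y *m U) *m (adjmx U *m X *m U) <->
  X *m Y = Y *m X.
Proof.
move=> UUt; have conjK Z : U *m (adjmx U *m Z *m U) *m adjmx U = Z.
  by rewrite !mulmxA UUt mul1mx -mulmxA UUt mulmx1.
rewrite !mulmx_conj //; split=> [/(congr1 (fun Z => U *m Z *m adjmx U))|->] //.
by rewrite !conjK.
Qed.

Lemma diag_mx_commute_sq n (e : 'rV[C]_n) (X : 'M[C]_n) : (forall i, 0 <= e 0 i) ->
  X *m (diag_mx e *m diag_mx e) = diag_mx e *m diag_mx e *m X ->
  X *m diag_mx e = diag_mx e *m X.
Proof.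
move=> e0; rewrite mulmx_diag => /matrixP XD2; apply/matrixP=> i j.
move: (XD2 i j); rewrite !mul_mx_diag !mul_diag_mx !mxE.
have [->|nz] := eqVneq (X i j) 0; first by rewrite !(mul0r, mulr0).
rewrite [_ * X i j]mulrC => /(mulfI nz) /eqP; rewrite -!expr2 eqrXn2 // => /eqP->.
by rewrite mulrC.
Qed.

Lemma psdmx_commute_sq n (B X : 'M[C]_n) : psdmx B ->
  X *m (B *m B) = B *m B *m X -> X *m B = B *m X.
Proof.
move=> pB; have BE := hermitian_spectralE (proj1 pB).
have UUt := spectralmx_unitary_r B; have UtU := spectralmx_unitary_l B.
set U := spectralmx B in BE UUt UtU; set D := diag_mx _ in BE.
set X' := U *m X *m adjmx U.
have XE : X = adjmx U *m X' *m U by rewrite !mulmxA UtU mul1mx -mulmxA UtU mulmx1.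
have BBE : B *m B = adjmx U *m (D *m D) *m U by rewrite BE mulmx_conj.
rewrite BBE XE BE !(commute_unitary_conj _ _ UUt).
by apply: diag_mx_commute_sq => i; apply: psdmx_spectral_ge0.
Qed.

Lemma psdmx_summand_mul0 n (P Q : 'M[C]_n) :
  adjmx P = P -> P *m Q = 0 -> psdmx (P + Q) -> psdmx P.
Proof.
move=> PH PQ pPQ; have PE := hermitian_spectralE PH.
have UUt := spectralmx_unitary_r P.
set U := spectralmx P in PE UUt; set d := spectral_diag P in PE.
have UP : U *m P = diag_mx d *m U by rewrite [in LHS]PE !mulmxA UUt mul1mx.
have UPU : U *m P *m adjmx U = diag_mx d by rewrite UP -mulmxA UUt mulmx1.
have DUQ : diag_mx d *m (U *m Q) = 0 by rewrite mulmxA -UP -mulmxA PQ mulmx0.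
have d0 i : 0 <= d 0 i.
  have [->|nz] := eqVneq (d 0 i) 0; first exact: lexx.
  have := psdmx_diag_ge0 i (psdmx_conj U pPQ).
  rewrite mulmxDr mulmxDl UPU mxE [diag_mx d i i]mxE eqxx mulr1n.
  suff -> : (U *m Q *m adjmx U) i i = 0 by rewrite addr0.
  rewrite mxE big1 // => k _.
  move/matrixP: DUQ => /(_ i k); rewrite mul_diag_mx !mxE => /eqP.
  by rewrite mulf_eq0 (negPf nz) => /eqP->; rewrite mul0r.
by rewrite PE; have := psdmx_conj (adjmx U) (psdmx_diag d0); rewrite adjmxK.
Qed.

End SpectralCalculus.

Section TraceNorm.
Variable C : numClosedFieldType.

Lemma absmxP n (H : 'M[C]_n) : adjmx H = H ->
  psdmx (absmx H) /\ absmx H *m absmx H = H *m H.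
Proof.
move=> HH; have pHH : psdmx (adjmx H *m H).
  by have := psdmx_gram (adjmx H); rewrite adjmxK.
by have [pB BB] := sqrtmxP pHH; split; [exact: pB | rewrite /absmx BB HH].
Qed.

(* [|H|] and [H] commute, so [(|H| + H) (|H| - H) = |H|^2 - H^2 = 0] while
   the sum of the two factors is the psd matrix [2 |H|]. *)
Lemma psdmx_absmx_pm n (H : 'M[C]_n) : adjmx H = H ->
  psdmx (absmx H + H) /\ psdmx (absmx H - H).
Proof.
move=> HH; have [pB BB] := absmxP HH; set B := absmx H in pB BB *.
have HB : H *m B = B *m H by apply: psdmx_commute_sq; rewrite // BB mulmxA.
have BH : adjmx B = B := proj1 pB.
have pBB : psdmx (B + B) by apply: psdmxD.
split.
  apply: (@psdmx_summand_mul0 _ _ _ (B - H)).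
  - by rewrite adjmxD BH HH.
  - by rewrite mulmxDl !mulmxBr BB HB addrA subrK subrr.
  - by rewrite addrACA subrr addr0.
apply: (@psdmx_summand_mul0 _ _ _ (B + H)).
- by rewrite adjmxB BH HH.
- by rewrite mulmxBl !mulmxDr BB HB opprD addrA addrK subrr.
- by rewrite addrACA addNr addr0.
Qed.

Lemma mxtrace_psdmx_mul_ge0 n (X Y : 'M[C]_n) : psdmx X -> psdmx Y -> 0 <= \tr (X *m Y).
Proof.
move=> pX pY; rewrite (hermitian_spectralE (proj1 pY)) !mulmxA mxtrace_mulC !mulmxA.
rewrite mul_mx_diag /mxtrace; apply: sumr_ge0 => i _; rewrite mxE.
by rewrite mulr_ge0 ?psdmx_spectral_ge0 // (psdmx_diag_ge0 i (psdmx_conj _ pX)).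
Qed.

Definition contraction n (S : 'M[C]_n) : Prop := psdmx (1%:M - S) /\ psdmx (1%:M + S).

Lemma mxtrace_contraction_le n (H S : 'M[C]_n) : adjmx H = H -> contraction S ->
  \tr (S *m H) <= \tr (absmx H).
Proof.
move=> HH [S1 S2]; have [pBH pBmH] := psdmx_absmx_pm HH.
set b := \tr (absmx H); set sh := \tr (S *m H).
suff E : \tr ((1%:M - S) *m (absmx H + H)) + \tr ((1%:M + S) *m (absmx H - H)) = (b - sh) *+ 2.
  have := addr_ge0 (mxtrace_psdmx_mul_ge0 S1 pBH) (mxtrace_psdmx_mul_ge0 S2 pBmH).
  by rewrite E pmulrn_lge0 // subr_ge0.
rewrite mulmxBl mulmxDl !mul1mx mulmxDr mulmxBr !(linearD, linearB) /= -/b -/sh.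
by rewrite -mulr_natr; ring.
Qed.

Lemma contractionN n (S : 'M[C]_n) : contraction S -> contraction (- S).
Proof. by move=> [S1 S2]; split; rewrite ?opprK. Qed.

Lemma mxtrace_contraction_psdmx n (S Y : 'M[C]_n) : contraction S -> psdmx Y ->
  - \tr Y <= \tr (S *m Y) <= \tr Y.
Proof.
move=> [S1 S2] pY.
have := mxtrace_psdmx_mul_ge0 S1 pY; have := mxtrace_psdmx_mul_ge0 S2 pY.
rewrite mulmxBl mulmxDl mul1mx linearB linearD /= => l1 l2.
by apply/andP; split; rewrite -subr_ge0 // opprK addrC.
Qed.

Lemma mxtrace_contraction_rescale_le n (S Y : 'M[C]_n) (p : C) :
  contraction S -> psdmx Y -> 0 < p -> 0 < \tr Y ->
  (p^-1 - (\tr Y)^-1) * \tr (S *m Y) <= `|p - \tr Y| / p.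
Proof.
move=> cS pY p0 q0; set q := \tr Y; set c := p^-1 - q^-1.
have /andP[lb ub] := mxtrace_contraction_psdmx cS pY.
have cr : c \is Num.real by rewrite rpredB ?rpredV ?gtr0_real.
have br : \tr (S *m Y) \is Num.real by rewrite (ler_real ub) gtr0_real.
have cq : c * q = (q - p) / p by rewrite /c; field; rewrite ?(gt_eqF p0) ?(gt_eqF q0).
apply: le_trans (real_ler_norm (rpredM cr br)) _; rewrite normrM.
apply: le_trans (ler_wpM2l (normr_ge0 c) (ler_norml_between (introT andP (conj lb ub)))) _.
by rewrite -[q in _ * q](gtr0_norm q0) -normrM cq normrM normfV (gtr0_norm p0) distrC.
Qed.

End TraceNorm.

Section TraceNormAttained.
Variable C : numClosedFieldType.

Lemma contraction_unitary_diag n (U : 'M[C]_n) (s : 'rV[C]_n) : adjmx U *m U = 1%:M ->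
  (forall i, 0 <= 1 - s 0 i) -> (forall i, 0 <= 1 + s 0 i) ->
  contraction (adjmx U *m diag_mx s *m U).
Proof.
move=> UtU s1 s2; have psd_conj_diag (t : 'rV[C]_n) : (forall i, 0 <= t 0 i) ->
    psdmx (adjmx U *m diag_mx t *m U).
  by move=> t0; have := psdmx_conj (adjmx U) (psdmx_diag t0); rewrite adjmxK.
split.
  have -> : 1%:M - adjmx U *m diag_mx s *m U = adjmx U *m diag_mx (const_mx 1 - s) *m U.
    by rewrite linearB /= diag_const_mx mulmxBr mulmxBl mulmx1 UtU.
  by apply: psd_conj_diag => i; rewrite !mxE.
have -> : 1%:M + adjmx U *m diag_mx s *m U = adjmx U *m diag_mx (const_mx 1 + s) *m U.
  by rewrite linearD /= diag_const_mx mulmxDr mulmxDl mulmx1 UtU.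
by apply: psd_conj_diag => i; rewrite !mxE.
Qed.

Lemma psdmx_diag_sq_le n (A : 'M[C]_n) i : psdmx A -> A i i ^+ 2 <= (A *m A) i i.
Proof.
move=> [AH _]; rewrite mxE (bigD1 i) //= expr2 lerDl; apply: sumr_ge0 => k _.
by rewrite -{2}AH !mxE mul_conjC_ge0.
Qed.

Lemma mxtrace_absmx_attained n (H : 'M[C]_n) : adjmx H = H ->
  exists2 S, contraction S & \tr (absmx H) <= \tr (S *m H).
Proof.
move=> HH; have [pB BB] := absmxP HH; set B := absmx H in pB BB *.
have HE := hermitian_spectralE HH.
have UUt := spectralmx_unitary_r H; have UtU := spectralmx_unitary_l H.
set U := spectralmx H in HE UUt UtU; set d := spectral_diag H in HE.
have dr i : d 0 i \is Num.real := hermitian_spectral_real HH i.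
set s : 'rV[C]_n := \row_i (if 0 <= d 0 i then 1 else -1).
exists (adjmx U *m diag_mx s *m U).
  apply: contraction_unitary_diag => // i; rewrite mxE; case: ifP => _;
  by rewrite ?opprK ?subrr ?addrN ?lexx ?addr_ge0 ?ler01.
have trSH : \tr (adjmx U *m diag_mx s *m U *m H) = \sum_i `|d 0 i|.
  rewrite HE mulmx_conj // mxtrace_mulC !mulmxA UUt mul1mx mulmx_diag /mxtrace.
  apply: eq_bigr => i _; rewrite !mxE eqxx mulr1n.
  case: ifP => d0; first by rewrite mul1r ger0_norm.
  by rewrite mulN1r ltr0_norm // real_ltNge ?d0.
set B' := U *m B *m adjmx U.
have pB' : psdmx B' by apply: psdmx_conj.
have trB : \tr B = \tr B' by rewrite /B' mxtrace_mulC mulmxA UtU mul1mx.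
have B'B' : B' *m B' = diag_mx d *m diag_mx d.
  by rewrite /B' mulmx_conj // BB -mulmx_conj // -hermitian_spectral_diagE.
rewrite trB trSH /mxtrace; apply: ler_sum => i _.
rewrite -ler_sqr ?nnegrE ?psdmx_diag_ge0 // real_normK //.
by have := psdmx_diag_sq_le i pB'; rewrite B'B' mulmx_diag !mxE eqxx mulr1n -expr2.
Qed.

End TraceNormAttained.

Section ProjectedStates.
Variables (C : numClosedFieldType) (n : nat) (Pi : 'M[C]_n).
Hypotheses (PiH : adjmx Pi = Pi) (PiPi : Pi *m Pi = Pi).

Lemma contraction_reflection : contraction (Pi - (1%:M - Pi)).
Proof.
have [pPi pPi'] := psdmx_projector PiH PiPi; split.
  have -> : 1%:M - (Pi - (1%:M - Pi)) = (1%:M - Pi) + (1%:M - Pi).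
    by apply/matrixP=> i j; rewrite !mxE; ring.
  exact: psdmxD.
have -> : 1%:M + (Pi - (1%:M - Pi)) = Pi + Pi.
  by apply/matrixP=> i j; rewrite !mxE; ring.
exact: psdmxD.
Qed.

Lemma contraction_compress (S : 'M[C]_n) : contraction S -> contraction (Pi *m S *m Pi).
Proof.
have pPi' := proj2 (psdmx_projector PiH PiPi).
move=> [S1 S2]; split.
  have -> : 1%:M - Pi *m S *m Pi = (1%:M - Pi) + Pi *m (1%:M - S) *m adjmx Pi.
    by rewrite PiH mulmxBr mulmxBl mulmx1 PiPi addrA subrK.
  by apply: psdmxD => //; exact: psdmx_conj.
have -> : 1%:M + Pi *m S *m Pi = (1%:M - Pi) + Pi *m (1%:M + S) *m adjmx Pi.
  by rewrite PiH mulmxDr mulmxDl mulmx1 PiPi addrA subrK.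
by apply: psdmxD => //; exact: psdmx_conj.
Qed.

Lemma projected_trace_gap (A B : 'M[C]_n) :
  adjmx A = A -> adjmx B = B -> \tr A = \tr B ->
  `|\tr (Pi *m A *m Pi) - \tr (Pi *m B *m Pi)| <= trdist A B.
Proof.
move=> AH BH trAB; rewrite /trdist; set H := A - B.
have HH : adjmx H = H by rewrite adjmxB AH BH.
have gapE : \tr (Pi *m A *m Pi) - \tr (Pi *m B *m Pi) = \tr (Pi *m H).
  by rewrite -(raddfB (@mxtrace C n)) -mulmxBl -mulmxBr [LHS]mxtrace_mulC mulmxA PiPi.
have reflE : \tr ((Pi - (1%:M - Pi)) *m H) = \tr (Pi *m H) *+ 2.
  by rewrite !mulmxBl mul1mx !(raddfB (@mxtrace C n)) /= trAB subrr sub0r opprK mulr2n.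
have le := mxtrace_contraction_le HH contraction_reflection.
have leN := mxtrace_contraction_le HH (contractionN contraction_reflection).
rewrite mulNmx linearN /= reflE in leN; rewrite reflE in le.
rewrite gapE; apply: ler_norml_between.
by rewrite lerNl !ler_pdivlMr ?ltr0n // !mulr_natr mulNrn leN le.
Qed.

Lemma trdist_projected_le (A B : 'M[C]_n) : psdmx A -> psdmx B ->
  let p := \tr (Pi *m A *m Pi) in let q := \tr (Pi *m B *m Pi) in
  0 < p -> 0 < q ->
  trdist (p^-1 *: (Pi *m A *m Pi)) (q^-1 *: (Pi *m B *m Pi)) <=
    (trdist A B + `|p - q| / 2) / p.
Proof.
move=> pA pB p q p0 q0; rewrite /trdist.
have psd_compress X : psdmx X -> psdmx (Pi *m X *m Pi).
  by move=> pX; have := psdmx_conj Pi pX; rewrite PiH.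
set X := Pi *m A *m Pi; set Y := Pi *m B *m Pi; set H := A - B.
have HH : adjmx H = H by rewrite adjmxB (proj1 pA) (proj1 pB).
set c := p^-1 - q^-1.
have HtE : p^-1 *: X - q^-1 *: Y = p^-1 *: (Pi *m H *m Pi) + c *: Y.
  by rewrite mulmxBr mulmxBl scalerBr scalerBl addrA subrK.
set Ht := p^-1 *: X - q^-1 *: Y in HtE *.
have HtH : adjmx Ht = Ht.
  rewrite adjmxB !adjmxZ (proj1 (psd_compress _ pA)) (proj1 (psd_compress _ pB)).
  by rewrite !geC0_conj ?invr_ge0 ?ltW.
have [S cS trS] := mxtrace_absmx_attained HtH.
have trSHt : \tr (S *m Ht) = p^-1 * \tr (Pi *m S *m Pi *m H) + c * \tr (S *m Y).
  rewrite HtE mulmxDr -!scalemxAr mxtraceD !mxtraceZ; congr (_ * _ + _).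
  by rewrite !mulmxA mxtrace_mulC !mulmxA.
have ha : \tr (Pi *m S *m Pi *m H) <= \tr (absmx H).
  exact: mxtrace_contraction_le HH (contraction_compress cS).
have hb := mxtrace_contraction_rescale_le cS (psd_compress _ pB) p0 q0.
have bound : \tr (absmx Ht) <= p^-1 * \tr (absmx H) + `|p - q| / p.
  apply: le_trans trS _; rewrite trSHt; apply: lerD hb.
  by apply: ler_wpM2l ha; rewrite invr_ge0 ltW.
have -> : (\tr (absmx H) / 2 + `|p - q| / 2) / p = (p^-1 * \tr (absmx H) + `|p - q| / p) / 2.
  by field; rewrite gt_eqF.
by apply: ler_wpM2r bound; rewrite invr_ge0 ler0n.
Qed.

End ProjectedStates.

Section ClassicalQuantum.
Variable C : numClosedFieldType.

Lemma psdmx_tens m n (A : 'M[C]_m) (B : 'M[C]_n) : psdmx A -> psdmx B -> psdmx (A *t B).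
Proof.
move=> pA pB; have [[RH _] RR] := sqrtmxP pA; have [[TH _] TT] := sqrtmxP pB.
rewrite -RR -TT -{2}RH -{2}TH -tensmx_mul -adjmx_tens; exact: psdmx_gram.
Qed.

Lemma mxtrace_tens m n (A : 'M[C]_m) (B : 'M[C]_n) : \tr (A *t B) = \tr A * \tr B.
Proof. by rewrite /mxtrace mulr_sum; apply: eq_bigr => k _; rewrite mxE. Qed.

Lemma mxtrace_delta n (x : 'I_n) : \tr (delta_mx x x : 'M[C]_n) = 1.
Proof.
rewrite /mxtrace (bigD1 x) //= mxE !eqxx big1 ?addr0 // => y yx.
by rewrite mxE (negPf yx).
Qed.

Lemma psdmx_ketbra n (x : 'I_n) : psdmx (ketbra C x).
Proof.
have -> : ketbra C x = delta_mx x x *m adjmx (delta_mx x x).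
  by rewrite adjmx_delta mul_delta_mx.
exact: psdmx_gram.
Qed.

Lemma cqstate_density n d (P : 'I_n -> C) (omega : 'I_n -> 'M[C]_d) :
  probdist P -> (forall x, densitymx (omega x)) -> densitymx (cqstate P omega).
Proof.
move=> [P0 P1] om; split.
  apply: psdmx_sum => x _; apply: psdmxZ => //.
  exact: psdmx_tens (psdmx_ketbra x) (proj1 (om x)).
rewrite /cqstate raddf_sum /= -[RHS]P1; apply: eq_bigr => x _.
by rewrite mxtraceZ mxtrace_tens /ketbra mxtrace_delta (proj2 (om x)) !mulr1.
Qed.

Lemma projS_hermitian n d (S : {set 'I_n}) : adjmx (projS C d S) = projS C d S.
Proof.
have [KH _] : psdmx (\sum_(x in S) ketbra C x).
  by apply: psdmx_sum => x _; exact: psdmx_ketbra.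
by rewrite /projS adjmx_tens adjmx1 KH.
Qed.

Lemma projS_idem n d (S : {set 'I_n}) : projS C d S *m projS C d S = projS C d S.
Proof.
rewrite /projS tensmx_mul mulmx1 mulmx_suml; congr (_ *t _); apply: eq_bigr => x xS.
rewrite mulmx_sumr (bigD1 x) //= /ketbra mul_delta_mx big1 ?addr0 // => y /andP[_ yx].
by rewrite mul_delta_mx_0 // eq_sym.
Qed.

End ClassicalQuantum.

Theorem lemma3 (C : numClosedFieldType) (n d : nat) (P Ps : 'I_n -> C)
  (omega omegas : 'I_n -> 'M[C]_d) (S : {set 'I_n}) (eps : C) :
  probdist P -> probdist Ps ->
  (forall x, densitymx (omega x)) -> (forall x, densitymx (omegas x)) ->
  let rho := cqstate P omega in
  let rhos := cqstate Ps omegas in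
  let Pi := projS C d S in
  let p := \tr (Pi *m rho *m Pi) in
  let ps := \tr (Pi *m rhos *m Pi) in
  let tau := p^-1 *: (Pi *m rho *m Pi) in
  let taus := ps^-1 *: (Pi *m rhos *m Pi) in
  0 < p -> 0 < ps -> 0 < eps ->
  trdist rho rhos <= p * (eps ^+ 2 / 4) ->
  `|p - ps| <= p * (eps ^+ 2 / 2) /\ trdist tau taus <= eps ^+ 2 / 2.
Proof.
move=> hP hPs hom homs rho rhos Pi p ps tau taus p0 ps0 eps0 hD.
have [prho trrho] := cqstate_density hP hom.
have [prhos trrhos] := cqstate_density hPs homs.
have PiH : adjmx Pi = Pi by exact: projS_hermitian.
have PiPi : Pi *m Pi = Pi by exact: projS_idem.
have gap : `|p - ps| <= trdist rho rhos.
  have trE : \tr rho = \tr rhos by rewrite trrho trrhos.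
  exact (projected_trace_gap PiH PiPi (proj1 prho) (proj1 prhos) trE).
have dist : trdist tau taus <= (trdist rho rhos + `|p - ps| / 2) / p.
  exact (trdist_projected_le PiH PiPi prho prhos p0 ps0).
have e4 : 0 <= p * (eps ^+ 2 / 4) by rewrite mulr_ge0 ?divr_ge0 ?exprn_ge0 ?ltW.
have e2E : p * (eps ^+ 2 / 4) + p * (eps ^+ 2 / 4) = p * (eps ^+ 2 / 2) by field.
split; first by apply: le_trans gap (le_trans hD _); rewrite -e2E lerDl.
apply: (le_trans dist); rewrite ler_pdivrMr // [_ * p]mulrC -e2E.
apply: (lerD hD); apply: (le_trans _ (le_trans gap hD)).
by apply: ler_piMr; rewrite ?normr_ge0 // invf_le1 ?ltr0n // ler1n.
Qed.
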